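(* Let $X_1,\ldots,X_n$ be (arbitrary, possibly dependent) $\{0,1\}$-valued random variables. Let $K\subsetneq[n]$ and $a_K\in\{0,1\}^K$ with $\Pr[X_K=a_K]>0$. Then there exists $i\in[n]\setminus K$ such that either $X_i$ is almost surely constant conditioned on $X_K=a_K$, or both events $\{X_K=a_K, X_i=0\}$ and $\{X_K=a_K,X_i=1\}$ have positive probability and $$\sum_{\ell\in[n]\setminus(K\cup\{i\})}\Big(\mathbb{E}[X_\ell\mid X_K=a_K, X_i=0]-\mathbb{E}[X_\ell\mid X_K=a_K, X_i=1]\Big)\le 1.$$
   Context: For $S\subseteq[n]$, $X_S\in\{0,1\}^S$ denotes the tuple $(X_i)_{i\in S}$. *)

From HB Require Import structures.
From mathcomp Require Import all_boot all_order all_algebra.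
Set Implicit Arguments. Unset Strict Implicit. Unset Printing Implicit Defensive.
Import Order.TTheory GRing.Theory Num.Theory.
Local Open Scope ring_scope.

Definition is_prob (R : realFieldType) (Omega : finType) (p : Omega -> R) : Prop :=
  (forall w, 0 <= p w) /\ \sum_(w : Omega) p w = 1.

Definition Pr (R : realFieldType) (Omega : finType) (p : Omega -> R)
  (A : pred Omega) : R := \sum_(w : Omega | A w) p w.

Definition condE (R : realFieldType) (Omega : finType) (p : Omega -> R)
  (Y : Omega -> R) (A : pred Omega) : R :=
  (\sum_(w : Omega | A w) p w * Y w) / Pr p A.

Definition evK (n : nat) (Omega : finType) (X : 'I_n -> Omega -> bool)
  (K : {set 'I_n}) (a : 'I_n -> bool) : pred Omega :=
  fun w => [forall k in K, X k w == a k].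

From HB Require Import structures.
From mathcomp Require Import all_boot all_order all_algebra.
From mathcomp Require Import ring lra.
Set Implicit Arguments. Unset Strict Implicit. Unset Printing Implicit Defensive.
Import Order.TTheory GRing.Theory Num.Theory.
Local Open Scope ring_scope.

(* Let [S] count the free coordinates [l \notin K] with [X_l = 1], on the
   event [A = {X_K = a_K}]. Expanding its (nonnegative) variance bilinearly
   gives [\sum_i f i >= 0] with [f i = \sum_l Cov(X_i, X_l)], so some [f i] is
   nonnegative. Conditioning on the bit [X_i], the gap
   [E[X_l | X_i = 0] - E[X_l | X_i = 1]] equals [-Cov(X_i, X_l) / Var(X_i)],
   and [Cov(X_i, X_i) = Var(X_i)], so the gaps over [l != i] sum to
   [1 - f i / Var(X_i) <= 1]. *)

Lemma eq_Pr (R : realFieldType) (Omega : finType) (p : Omega -> R)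
    (A B : pred Omega) :
  A =1 B -> Pr p A = Pr p B.
Proof. by move=> eqAB; apply: eq_bigl. Qed.

Lemma eq_condE (R : realFieldType) (Omega : finType) (p : Omega -> R)
    (Y : Omega -> R) (A B : pred Omega) :
  A =1 B -> condE p Y A = condE p Y B.
Proof. by move=> eqAB; rewrite /condE (eq_Pr _ eqAB) (eq_bigl _ _ eqAB). Qed.

Section WeightedCovariance.

Variables (R : realFieldType) (Omega : finType) (q : Omega -> R) (A : pred Omega).
Hypothesis q_ge0 : forall w, 0 <= q w.

(* [cov] is [Pr q A ^+ 2] times the covariance under [q] conditioned on [A]. *)
Definition wsum (F : Omega -> R) := \sum_(w | A w) q w * F w.
Definition cov (F G : Omega -> R) :=
  Pr q A * wsum (fun w => F w * G w) - wsum F * wsum G.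

Lemma covC F G : cov F G = cov G F.
Proof.
rewrite /cov [wsum F * _]mulrC; congr (_ * _ - _).
by apply: eq_bigr => w _; rewrite (mulrC (F w)).
Qed.

Lemma wsum_sum (I : finType) (J : {pred I}) (g : I -> Omega -> R) :
  \sum_(l in J) wsum (g l) = wsum (fun w => \sum_(l in J) g l w).
Proof. by rewrite exchange_big; apply: eq_bigr => w _; rewrite mulr_sumr. Qed.

Lemma cov_sumr (I : finType) (J : {pred I}) F (g : I -> Omega -> R) :
  \sum_(l in J) cov F (g l) = cov F (fun w => \sum_(l in J) g l w).
Proof.
rewrite /cov sumrB -!mulr_sumr !wsum_sum; congr (_ * _ - _).
by apply: eq_bigr => w _; rewrite -mulr_sumr.
Qed.

Lemma cov_ge0 F : 0 <= cov F F.
Proof.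
have [A0|A_neq0] := eqVneq (Pr q A) 0.
  have q0 w : A w -> q w = 0 by apply: (psumr_eq0P (fun w _ => q_ge0 w)).
  have wsum0 G : wsum G = 0 by rewrite /wsum big1 // => w /q0 ->; rewrite mul0r.
  by rewrite /cov A0 !wsum0 !mul0r subrr.
have A_gt0 : 0 < Pr q A by rewrite lt_def A_neq0 sumr_ge0.
have sq : Pr q A * cov F F = \sum_(w | A w) q w * (Pr q A * F w - wsum F) ^+ 2.
  rewrite (eq_bigr (fun w => Pr q A ^+ 2 * (q w * (F w * F w))
      - 2 * Pr q A * wsum F * (q w * F w) + wsum F ^+ 2 * q w)); last first.
    by move=> w _; ring.
  by rewrite big_split sumrB /= -!mulr_sumr /cov -/(wsum _) -/(wsum F) -/(Pr q A); ring.
rewrite -(pmulr_rge0 _ A_gt0) sq.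
by apply: sumr_ge0 => w _; rewrite mulr_ge0 ?sqr_ge0.
Qed.

Lemma sum_cov_ge0 (I : finType) (J : {pred I}) (g : I -> Omega -> R) :
  0 <= \sum_(i in J) \sum_(l in J) cov (g i) (g l).
Proof. by under eq_bigr do rewrite cov_sumr covC; rewrite cov_sumr cov_ge0. Qed.

Section Indicator.

Variable B : pred Omega.
Let b w : R := (B w)%:R.

Lemma wsum_indicator F :
  \sum_(w | A w && B w) q w * F w = wsum (fun w => F w * b w).
Proof.
rewrite big_mkcondr; apply: eq_bigr => w _.
by rewrite /b; case: (B w); rewrite ?mulr1 ?mulr0.
Qed.

Lemma wsum_indicatorC F :
  \sum_(w | A w && ~~ B w) q w * F w = wsum F - wsum (fun w => F w * b w).
Proof.
rewrite big_mkcondr /wsum -sumrB; apply: eq_bigr => w _.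
by rewrite /b; case: (B w); rewrite /= ?mulr1 ?mulr0 ?subrr ?subr0.
Qed.

Lemma Pr_indicator : Pr q (fun w => A w && B w) = wsum b.
Proof.
rewrite /Pr big_mkcondr; apply: eq_bigr => w _.
by rewrite /b; case: (B w); rewrite ?mulr1 ?mulr0.
Qed.

Lemma Pr_indicatorC : Pr q (fun w => A w && ~~ B w) = Pr q A - wsum b.
Proof.
rewrite /Pr big_mkcondr /wsum -sumrB; apply: eq_bigr => w _.
by rewrite /b; case: (B w); rewrite /= ?mulr1 ?subrr ?mulr0 ?subr0.
Qed.

Lemma cov_indicator :
  cov b b = Pr q (fun w => A w && ~~ B w) * Pr q (fun w => A w && B w).
Proof.
have bb : wsum (fun w => b w * b w) = wsum b.
  by apply: eq_bigr => w _; rewrite /b; case: (B w); rewrite ?mulr1 ?mulr0.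
by rewrite Pr_indicator Pr_indicatorC /cov bb; ring.
Qed.

Lemma condE_gap_indicator F :
  let P0 := Pr q (fun w => A w && ~~ B w) in
  let P1 := Pr q (fun w => A w && B w) in
  P0 != 0 -> P1 != 0 ->
  condE q F (fun w => A w && ~~ B w) - condE q F (fun w => A w && B w)
    = - cov F b / (P0 * P1).
Proof.
move=> P0 P1; rewrite /P0 /P1 Pr_indicator Pr_indicatorC => P0_neq0 P1_neq0.
rewrite /condE Pr_indicator Pr_indicatorC wsum_indicator wsum_indicatorC /cov.
by field; rewrite P0_neq0 P1_neq0.
Qed.

End Indicator.

End WeightedCovariance.

Lemma exists_ge0_of_sum_ge0 (R : realDomainType) (I : finType) (J : {set I})
    (f : I -> R) :
  J != set0 -> 0 <= \sum_(i in J) f i -> exists2 i, i \in J & 0 <= f i.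
Proof.
move=> /set0Pn[j jJ] sum_ge0.
case: (boolP [exists i in J, 0 <= f i]) => [/exists_inP[i iJ fi]|]; first by exists i.
move=> /exists_inPn f_lt0; exfalso.
have {}f_lt0 i : i \in J -> f i < 0 by move=> /f_lt0; rewrite -ltNge.
have rest_le0 : \sum_(i in J :\ j) f i <= 0.
  by apply: sumr_le0 => i /setD1P[_ /f_lt0/ltW].
have := f_lt0 j jJ; move: sum_ge0; rewrite (big_setD1 j jJ) /=; lra.
Qed.

Theorem mainTheorem2 (R : realFieldType) (Omega : finType) (p : Omega -> R)
  (n : nat) (X : 'I_n -> Omega -> bool) (K : {set 'I_n}) (a : 'I_n -> bool) :
  is_prob p ->
  K \proper [set: 'I_n] ->
  0 < Pr p (evK X K a) ->
  exists i : 'I_n, i \notin K /\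
    ((exists b : bool, Pr p (fun w => evK X K a w && (X i w != b)) = 0)
     \/
     (0 < Pr p (fun w => evK X K a w && (X i w == false)) /\
      0 < Pr p (fun w => evK X K a w && (X i w == true)) /\
      \sum_(l in ~: (i |: K))
         (condE p (fun w => (X l w)%:R) (fun w => evK X K a w && (X i w == false))
          - condE p (fun w => (X l w)%:R) (fun w => evK X K a w && (X i w == true)))
        <= 1)).
Proof.
move=> [p_ge0 _] K_proper _; set A := evK X K a.
have free_neq0 : ~: K != set0 by rewrite -setTD setD_eq0 subTset -properT.
have /(exists_ge0_of_sum_ge0 free_neq0) [i iK cov_i_ge0] :=
  sum_cov_ge0 A p_ge0 (~: K) (fun l w => (X l w)%:R).
exists i; split; first by rewrite -in_setC.
have eq0 c : (fun w => A w && (X i w == ~~ c)) =1 (fun w => A w && (X i w != c)).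
  by move=> w; case: c (X i w) => [] [].
have eq1 : (fun w => A w && (X i w == true)) =1 (fun w => A w && X i w).
  by move=> w; rewrite eqb_id.
have eqF : (fun w => A w && (X i w == false)) =1 (fun w => A w && ~~ X i w).
  by move=> w; rewrite eqbF_neg.
have [P0|P0_neq0] := eqVneq (Pr p (fun w => A w && ~~ X i w)) 0.
  by left; exists true; rewrite -(eq_Pr _ (eq0 true)) (eq_Pr _ eqF).
have [P1|P1_neq0] := eqVneq (Pr p (fun w => A w && X i w)) 0.
  by left; exists false; rewrite -(eq_Pr _ (eq0 false)) (eq_Pr _ eq1).
have P0_gt0 : 0 < Pr p (fun w => A w && ~~ X i w) by rewrite lt_def P0_neq0 sumr_ge0.
have P1_gt0 : 0 < Pr p (fun w => A w && X i w) by rewrite lt_def P1_neq0 sumr_ge0.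
right; rewrite (eq_Pr _ eqF) (eq_Pr _ eq1); do 2!split=> //.
under eq_bigr do rewrite (eq_condE _ _ eqF) (eq_condE _ _ eq1)
  condE_gap_indicator // covC.
rewrite -mulr_suml sumrN ler_pdivrMr ?mulr_gt0 // mul1r.
have -> : ~: (i |: K) = ~: K :\ i by rewrite setCU setDE setIC.
by move: cov_i_ge0; rewrite (big_setD1 i iK) /= cov_indicator; lra.
Qed.
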